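(* Let $\Omega\subset\mathbb{R}^2$ be a convex polygon with $m$ sides, let $p\in\operatorname{int}\Omega$ and $r>0$. Then the Thompson ball $B_T(p,r)$ equals $B_F(p,r)\cap B_{rF}(p,r)$, and it is a convex polygon with at most $2m$ sides.
   Context: For distinct $p,q\in\operatorname{int}\Omega$, let $q'$ be the point where the ray from $p$ through $q$ meets $\partial\Omega$. The Funk weak metric is $F_\Omega(p,q)=\ln\frac{\|p-q'\|}{\|q-q'\|}$, with $F_\Omega(p,p)=0$. The reverse Funk metric is $rF_\Omega(p,q)=F_\Omega(q,p)$. The Thompson metric is $T_\Omega(p,q)=\max(F_\Omega(p,q),rF_\Omega(p,q))$. For a function $D\in\{F_\Omega,rF_\Omega,T_\Omega\}$, the ball of radius $r$ about $p$ is $B_D(p,r)=\{q\in\operatorname{int}\Omega: D(p,q)\le r\}$; these are written $B_F$, $B_{rF}$, $B_T$ respectively. *)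

From HB Require Import structures.
From mathcomp Require Import all_boot all_order all_algebra.
From mathcomp Require Import all_classical all_reals all_analysis.
Set Implicit Arguments. Unset Strict Implicit. Unset Printing Implicit Defensive.
Import Order.TTheory GRing.Theory Num.Theory.
Import numFieldNormedType.Exports.
Local Open Scope classical_set_scope.
Local Open Scope ring_scope.

Section Defs.
Variable R : realType.
Notation P := (R * R)%type.

Definition edist (x y : P) : R :=
  Num.sqrt ((x.1 - y.1) ^+ 2 + (x.2 - y.2) ^+ 2).

Definition bdry (S : set P) : set P := closure S `\` interior S.

Definition ray (p q : P) : set P :=
  [set x | exists t : R, 0 <= t /\ x = (p.1 + t * (q.1 - p.1), p.2 + t * (q.2 - p.2))].

Definition exit_point (Om : set P) (p q : P) : P :=
  xget p (ray p q `&` bdry Om).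

Definition Funk (Om : set P) (p q : P) : R :=
  if p == q then 0
  else ln (edist p (exit_point Om p q) / edist q (exit_point Om p q)).

Definition rFunk (Om : set P) (p q : P) : R := Funk Om q p.

Definition Thompson (Om : set P) (p q : P) : R :=
  Num.max (Funk Om p q) (rFunk Om p q).

Definition ball_D (Om : set P) (D : P -> P -> R) (p : P) (r : R) : set P :=
  [set q | interior Om q /\ D p q <= r].

Definition halfplane (a : P) (b : R) : set P :=
  [set x | a.1 * x.1 + a.2 * x.2 <= b].

Definition polygon_hrep (n : nat) (S : set P) : Prop :=
  (exists M : R, forall x, S x -> `|x.1| <= M /\ `|x.2| <= M) /\
  interior S !=set0 /\
  exists (a : 'I_n -> P) (b : 'I_n -> R),
    (forall i, a i != 0) /\ S = [set x | forall i, halfplane (a i) (b i) x].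

(* S is a convex polygon with exactly m sides: the number of sides of a
   convex polygon is the minimal number of half-planes cutting it out *)
Definition convex_polygon_sides (S : set P) (m : nat) : Prop :=
  polygon_hrep m S /\ forall k, (k < m)%N -> ~ polygon_hrep k S.

End Defs.

From Pilot Require Import Defs.
From HB Require Import structures.
From mathcomp Require Import all_boot all_order all_algebra.
From mathcomp Require Import all_classical all_reals all_analysis.
From mathcomp Require Import ring lra.
Import Order.TTheory GRing.Theory Num.Theory.
Import numFieldNormedType.Exports.
Local Open Scope classical_set_scope.
Local Open Scope ring_scope.
Set Implicit Arguments.

(* Write Omega = {x | a_i . x <= b_i, i < m}.  For x <> y in int Omega the ray from x
   through y leaves Omega at x + t (y - x), where t is the least ratio
   (b_i - a_i . x) / (a_i . (y - x)) over the constraints increasing along the ray, so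
   F(x, y) = ln (t / (t - 1)); and F(x, y) <= r unfolds to the m linear inequalities
   e^r a_i . (y - x) <= (e^r - 1) (b_i - a_i . x).  Hence B_F(p, r) is cut out by m
   half-planes in q and B_rF(p, r) by m half-planes within int Omega; as B_F(p, r)
   already lies in int Omega, B_T(p, r) = B_F(p, r) ∩ B_rF(p, r) is the intersection
   of these 2m half-planes, a bounded set containing p in its interior. *)

Section PlanePolyhedra.
Variable R : realType.
Implicit Types (a x y z : R * R) (b t : R).

Definition dotp a x : R := a.1 * x.1 + a.2 * x.2.

Definition lerp x y t : R * R := (x.1 + t * (y.1 - x.1), x.2 + t * (y.2 - x.2)).

(* Convertible to the intersection of the [halfplane (a i) (b i)] of [polygon_hrep]. *)
Definition polyhedron n (a : 'I_n -> R * R) (b : 'I_n -> R) : set (R * R) :=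
  [set x | forall i, dotp (a i) x <= b i].

Definition ord_cat T n k (f : 'I_n -> T) (g : 'I_k -> T) (i : 'I_(n + k)) : T :=
  match fintype.split i with inl j => f j | inr j => g j end.

Lemma dotpZ k a x : dotp (k *: a) x = k * dotp a x.
Proof. by rewrite /dotp /= -!mulrA -mulrDr. Qed.

Lemma dotpN a x : dotp (- a) x = - dotp a x.
Proof. by rewrite /dotp /= !mulNr opprD. Qed.

Lemma dotp_lerp a x y t : dotp a (lerp x y t) = dotp a x + t * (dotp a y - dotp a x).
Proof. by rewrite /dotp /=; ring. Qed.

Lemma dotp_self_gt0 a : a != 0 -> 0 < dotp a a.
Proof.
case: a => a1 a2 ha; rewrite /dotp /= -!expr2 lt_neqAle addr_ge0 ?sqr_ge0 // andbT.
rewrite eq_sym paddr_eq0 ?sqr_ge0 // !sqrf_eq0.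
by apply: contra ha => /andP[/eqP-> /eqP->].
Qed.

Lemma edist_gt0 x y : x != y -> 0 < Defs.edist x y.
Proof.
rewrite -subr_eq0 => /dotp_self_gt0; rewrite /dotp /= -!expr2 => hxy.
by rewrite /Defs.edist sqrtr_gt0.
Qed.

Lemma edist_lerp_l x y t : Defs.edist x (lerp x y t) = `|t| * Defs.edist x y.
Proof. by rewrite /Defs.edist /= -sqrtr_sqr -sqrtrM ?sqr_ge0 //; congr Num.sqrt; ring. Qed.

Lemma edist_lerp_r x y t : Defs.edist y (lerp x y t) = `|t - 1| * Defs.edist x y.
Proof. by rewrite /Defs.edist /= -sqrtr_sqr -sqrtrM ?sqr_ge0 //; congr Num.sqrt; ring. Qed.

Lemma continuous_dotp a : continuous (dotp a).
Proof.
move=> x; apply: cvgD; apply: cvgM; try exact: cvg_cst.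
- exact: cvg_fst.
- exact: cvg_snd.
Qed.

Lemma near_dotp_lt a b x : dotp a x < b -> \forall y \near x, dotp a y < b.
Proof.
move=> h; have := continuous_dotp a x; move/(_ [set z | z < b]); apply.
by apply: open_nbhs_nbhs; split; [exact: open_lt |].
Qed.

Lemma closed_dotp_le a b : closed [set x | dotp a x <= b].
Proof.
have -> : [set x | dotp a x <= b] = dotp a @^-1` [set z | z <= b] by [].
by apply: preimage_closed => [x _|]; [exact: continuous_dotp | exact: closed_le].
Qed.

Lemma ray_bounded_eq (x y M : R) :
  (forall t, 0 <= t -> `|x + t * (y - x)| <= M) -> y = x.
Proof.
move=> hM; apply: contrapT => /eqP; rewrite -subr_eq0 -normr_gt0 => hyx.
have hx : `|x| <= M by have := hM 0 (lexx 0); rewrite mul0r addr0.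
have hM0 : 0 <= M := le_trans (normr_ge0 x) hx.
set t := (2 * M + 1) / `|y - x|.
have ht : 0 <= t by apply: divr_ge0; lra.
have htyx : `|t * (y - x)| = 2 * M + 1 by rewrite normrM ger0_norm // divfK ?gt_eqF.
have := ler_normB (x + t * (y - x)) x; rewrite addrAC subrr add0r htyx.
by have := hM t ht; lra.
Qed.

Lemma continuous_lerp x y : continuous (lerp x y).
Proof.
move=> t; apply: (@cvg_pair _ _ _ _ (nbhs (lerp x y t).1) (nbhs (lerp x y t).2));
  by apply: cvgD; [exact: cvg_cst | apply: cvgM; [exact: cvg_id | exact: cvg_cst]].
Qed.

Lemma nbhs_lerp x y S : nbhs x S -> exists2 t, 0 < t & S (lerp x y t).
Proof.
move=> hS; have /nbhs_ballP[e /= e0 he] : nbhs (0 : R) (lerp x y @^-1` S).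
  by apply: continuous_lerp; rewrite /lerp !mul0r !addr0; case: x hS.
exists (e / 2); first by rewrite divr_gt0.
by apply: he; rewrite /ball /= sub0r normrN gtr0_norm ?divr_gt0 //; lra.
Qed.

Lemma polyhedron_cat n k (a1 : 'I_n -> R * R) (b1 : 'I_n -> R)
    (a2 : 'I_k -> R * R) (b2 : 'I_k -> R) :
  polyhedron (ord_cat a1 a2) (ord_cat b1 b2) = polyhedron a1 b1 `&` polyhedron a2 b2.
Proof.
apply/seteqP; split=> x.
- move=> hx; split=> j; [have := hx (unsplit (inl j)) | have := hx (unsplit (inr j))];
    by rewrite /ord_cat unsplitK.
- by move=> [hx1 hx2] i; rewrite /ord_cat; case: fintype.split.
Qed.

Lemma Funk_lerp_exit {Om : set (R * R)} {x y t} : x != y -> 1 < t ->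
  exit_point Om x y = lerp x y t -> Funk Om x y = ln (t / (t - 1)).
Proof.
move=> hxy ht he; rewrite /Funk (negbTE hxy) he edist_lerp_l edist_lerp_r.
rewrite !gtr0_norm ?subr_gt0 //; last lra.
by rewrite invfM mulrACA divff ?mulr1 // gt_eqF // edist_gt0.
Qed.

Lemma Thompson_ball_eq (Om : set (R * R)) p r :
  ball_D Om (Thompson Om) p r = ball_D Om (Funk Om) p r `&` ball_D Om (rFunk Om) p r.
Proof.
apply/seteqP; split=> q; rewrite /ball_D /Thompson /= ge_max.
- by move=> [hq /andP[h1 h2]].
- by move=> [[hq h1] [_ h2]]; rewrite h1 h2.
Qed.

Lemma polygon_hrep_sides (S : set (R * R)) n :
  polygon_hrep n S -> exists2 k, (k <= n)%N & convex_polygon_sides S k.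
Proof.
move=> hS; have hex : exists k, `[< polygon_hrep k S >] by exists n; apply/asboolP.
case: (ex_minnP hex) => k /asboolP hk hmin; exists k; first exact: hmin (asboolT hS).
by split=> // k' hk' /asboolP/hmin; rewrite leqNgt hk'.
Qed.

Section Polyhedron.
Context {n : nat} {a : 'I_n -> R * R} {b : 'I_n -> R}.
Local Notation P := (polyhedron a b).

Lemma closed_polyhedron : closed P.
Proof.
have -> : P = \bigcap_(i in setT) [set x | dotp (a i) x <= b i].
  by apply/seteqP; split=> [x hx i _ | x hx i]; apply: hx.
by apply: closed_bigI => i _; exact: closed_dotp_le.
Qed.

Lemma interior_polyhedron_lt x : (forall i, dotp (a i) x < b i) -> interior P x.
Proof.
move=> hx; apply: (@filterS _ _ _ [set y | forall i, dotp (a i) y < b i]).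
  by move=> y hy i; exact: ltW.
apply: (@filter_forall _ _ (fun i y => dotp (a i) y < b i) (nbhs x)) => i.
exact: near_dotp_lt.
Qed.

Hypothesis a_neq0 : forall i, a i != 0.

Lemma interior_polyhedron x : interior P x <-> forall i, dotp (a i) x < b i.
Proof.
split=> [hx i|]; last exact: interior_polyhedron_lt.
rewrite lt_neqAle (interior_subset hx i) andbT; apply/eqP => hxi.
have [t t0 /(_ i)] := nbhs_lerp (x + a i) hx; rewrite dotp_lerp.
have -> : dotp (a i) (x + a i) = dotp (a i) x + dotp (a i) (a i) by rewrite /dotp /=; ring.
have : 0 < dotp (a i) (a i) by exact: dotp_self_gt0.
rewrite hxi; nra.
Qed.

Lemma bdry_polyhedron z : bdry P z <-> P z /\ exists j, dotp (a j) z = b j.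
Proof.
rewrite /bdry -(closure_id P).1; last exact: closed_polyhedron.
split=> [[hz hint] | [hz [j hj]]]; split=> //.
- apply: contrapT => hno; apply: hint; apply/interior_polyhedron => i.
  by rewrite lt_neqAle hz andbT; apply/eqP => e; apply: hno; exists i.
- by move/interior_polyhedron/(_ j); rewrite hj ltxx.
Qed.

End Polyhedron.

Section BoundedPolyhedron.
Context {n : nat} {a : 'I_n -> R * R} {b : 'I_n -> R}.
Local Notation P := (polyhedron a b).
Hypothesis a_neq0 : forall i, a i != 0.
Hypothesis bounded_P : exists M : R, forall x, P x -> `|x.1| <= M /\ `|x.2| <= M.

Lemma polyhedron_ray_exits x y : P x -> y != x -> exists j, dotp (a j) x < dotp (a j) y.
Proof.
move=> hx hyx; apply: contrapT => hno.
have hle i : dotp (a i) y <= dotp (a i) x.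
  by rewrite leNgt; apply/negP => h; apply: hno; exists i.
have hray t : 0 <= t -> P (lerp x y t).
  by move=> t0 i; rewrite dotp_lerp; have := hx i; have := hle i; nra.
have [M hM] := bounded_P.
have [h1 h2] : y.1 = x.1 /\ y.2 = x.2.
  by split; apply: (@ray_bounded_eq _ _ M) => t t0; have [] := hM _ (hray t t0).
by move/eqP: hyx; apply; case: x y {hx hno hle hray} h1 h2 => ? ? [? ?] /= -> ->.
Qed.

Lemma exit_point_polyhedron {x y} : (forall i, dotp (a i) x < b i) -> y != x ->
  exists t, [/\ 0 <= t, exit_point P x y = lerp x y t, P (lerp x y t)
                & exists j, dotp (a j) (lerp x y t) = b j].
Proof.
move=> hx hyx.
have [j0 hj0] : exists j, dotp (a j) x < dotp (a j) y.
  by apply: polyhedron_ray_exits hyx => i; exact: ltW.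
pose u i := dotp (a i) y - dotp (a i) x.
pose s i := b i - dotp (a i) x.
have hs i : 0 < s i by rewrite subr_gt0.
have [z hz] : exists z, (ray x y `&` bdry P) z.
  have hu0 : 0 < u j0 by rewrite subr_gt0.
  case: (@arg_minP _ R _ j0 (fun i => 0 < u i) (fun i => s i / u i) hu0) => j hj hmin.
  (* The first constraint hit along the ray. *)
  set T := s j / u j.
  have hT : 0 < T by rewrite divr_gt0 // hs.
  have hTj : T * u j = s j by rewrite divfK // gt_eqF.
  exists (lerp x y T); split; first by exists T; split => //; exact: ltW.
  apply/bdry_polyhedron => //; split; last by exists j; move: hTj; rewrite dotp_lerp /u /s; lra.
  move=> i; rewrite dotp_lerp; have := hs i.
  case: (ltP 0 (u i)) => hui; last by move: hui; rewrite /u /s; nra.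
  by have := hmin i hui; rewrite ler_pdivlMr // -/T; move: hui; rewrite /u /s; nra.
have [[t [t0 he]] /bdry_polyhedron hb] := xgetPex x (ex_intro _ z hz).
have [hin hj] := hb a_neq0; rewrite he in hin hj.
by exists t; split; rewrite // /exit_point he.
Qed.

Lemma Funk_polyhedron_le {x y r} :
  (forall i, dotp (a i) x < b i) -> (forall i, dotp (a i) y < b i) -> 0 < r ->
  Funk P x y <= r <->
  forall i, expR r * (dotp (a i) y - dotp (a i) x) <= (expR r - 1) * (b i - dotp (a i) x).
Proof.
move=> hx hy hr; have hE : 1 < expR r by rewrite expR_gt1.
have [<-|hxy] := eqVneq x y.
  rewrite /Funk eqxx; split=> [_ i|_]; last exact: ltW.
  by rewrite subrr mulr0 mulr_ge0 // subr_ge0 ltW.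
have hyx : y != x by rewrite eq_sym.
have [t [t0 he hin [j hj]]] := exit_point_polyhedron hx hyx.
rewrite dotp_lerp in hj.
have hu : dotp (a j) x < dotp (a j) y by have := hx j; nra.
have ht : 1 < t by have := hy j; nra.
rewrite (Funk_lerp_exit hxy ht he) -{1}(expRK r) ler_ln ?posrE ?expR_gt0 //;
  last by rewrite divr_gt0 //; lra.
rewrite ler_pdivrMr; last lra.
split=> [hle i | h].
- have := hin i; have := hx i; rewrite dotp_lerp.
  by case: (ltP 0 (dotp (a i) y - dotp (a i) x)) => hui; nra.
- by have := h j; have := hx j; nra.
Qed.

Section Balls.
Context {p : R * R} {r : R}.
Hypotheses (p_in : interior P p) (r_gt0 : 0 < r).
Local Notation E := (expR r).

Lemma Funk_ball_polyhedron :
  ball_D P (Funk P) p r =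
  polyhedron (fun i => E *: a i) (fun i => (E - 1) * b i + dotp (a i) p).
Proof.
have hE : 1 < E by rewrite expR_gt1.
have hp := (interior_polyhedron a_neq0 p).1 p_in.
apply/seteqP; split=> q /=.
- move=> [/(interior_polyhedron a_neq0) hq /(Funk_polyhedron_le hp hq r_gt0) h] i.
  by rewrite dotpZ; have := h i; nra.
- move=> hq; have hqs i : dotp (a i) q < b i.
    by have := hq i; have := hp i; rewrite /= dotpZ; nra.
  split; first exact/(interior_polyhedron a_neq0).
  by apply/(Funk_polyhedron_le hp hqs r_gt0) => i; have := hq i; rewrite /= dotpZ; nra.
Qed.

Lemma rFunk_ball_polyhedron :
  ball_D P (rFunk P) p r =
  interior P `&` polyhedron (fun i => - a i) (fun i => (E - 1) * b i - E * dotp (a i) p).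
Proof.
have hp := (interior_polyhedron a_neq0 p).1 p_in.
apply/seteqP; split=> q [hq h]; split=> //; have hqs := (interior_polyhedron a_neq0 q).1 hq.
- by move=> i; rewrite dotpN; have := (Funk_polyhedron_le hqs hp r_gt0).1 h i; nra.
- by apply/(Funk_polyhedron_le hqs hp r_gt0) => i; have := h i; rewrite /= dotpN; nra.
Qed.

Lemma Thompson_ball_polyhedron :
  ball_D P (Thompson P) p r =
  polyhedron (ord_cat (fun i => E *: a i) (fun i => - a i))
             (ord_cat (fun i => (E - 1) * b i + dotp (a i) p)
                      (fun i => (E - 1) * b i - E * dotp (a i) p)).
Proof.
have Funk_ball_sub : ball_D P (Funk P) p r `<=` interior P by move=> q [].
rewrite Thompson_ball_eq rFunk_ball_polyhedron setIA (setIidl Funk_ball_sub).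
by rewrite Funk_ball_polyhedron polyhedron_cat.
Qed.

Lemma polygon_hrep_Thompson_ball : polygon_hrep (n + n) (ball_D P (Thompson P) p r).
Proof.
have hE : 1 < E by rewrite expR_gt1.
have hp := (interior_polyhedron a_neq0 p).1 p_in.
have c_neq0 i : ord_cat (fun i => E *: a i) (fun i => - a i) i != 0.
  rewrite /ord_cat; case: fintype.split => j;
    by rewrite ?scaler_eq0 ?(gt_eqF (expR_gt0 r)) ?oppr_eq0 ?a_neq0.
split; [|split].
- have [M hM] := bounded_P; exists M => q [hq _]; exact: hM (interior_subset hq).
- exists p; rewrite Thompson_ball_polyhedron; apply/(interior_polyhedron c_neq0) => i.
  by rewrite /ord_cat; case: fintype.split => j /=; rewrite ?dotpZ ?dotpN; have := hp j; nra.
- by eexists _, _; split; [exact: c_neq0 | exact: Thompson_ball_polyhedron].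
Qed.

End Balls.
End BoundedPolyhedron.
End PlanePolyhedra.

Unset Implicit Arguments.

Theorem mainTheorem1 (R : realType) (m : nat) (Om : set (R * R)) (p : R * R) (r : R) :
  convex_polygon_sides Om m -> interior Om p -> 0 < r ->
  ball_D Om (@Thompson R Om) p r =
    ball_D Om (@Funk R Om) p r `&` ball_D Om (@rFunk R Om) p r /\
  exists k : nat, (k <= 2 * m)%N /\ convex_polygon_sides (ball_D Om (@Thompson R Om) p r) k.
Proof.
move=> [[hbd [_ [a [b [ha hOm]]]]] _] hp hr; subst Om.
split; first exact: Thompson_ball_eq.
have [k hk hsides] := polygon_hrep_sides (polygon_hrep_Thompson_ball ha hbd hp hr).
by exists k; rewrite mul2n -addnn.
Qed.
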